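(* In the setting of the context, let $\mathcal S=(O_1,\dots,O_M)\in\mathcal Z^M$, let $m\in\{1,\dots,M\}$ and $O'_m\in\mathcal Z$, and let $\mathcal S^m$ be $\mathcal S$ with $O_m$ replaced by $O'_m$. Run SGD for $T$ steps on $\mathcal S$ and on $\mathcal S^m$ from the same initialization $\Psi_0$ and with the same index sequence $j_0,\dots,j_{T-1}$. Then $$\mathbb E_A\big[\|\Psi_{\mathcal S,T}-\Psi_{\mathcal S^m,T}\|_2\big]\le\frac{2\beta'\sqrt d}{M}\sum_{t=1}^T(1+\beta' d)^{t-1},$$ and consequently, for every $O\in\mathcal Z$, $$\big|\mathbb E_A[\mathcal L(O,\Psi_{\mathcal S,T})-\mathcal L(O,\Psi_{\mathcal S^m,T})]\big|\le\frac{2\beta\beta' d}{M}\sum_{t=1}^T(1+\beta' d)^{t-1}.$$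
   Context: An instance is a binary vector in $\{0,1\}^D$ formed by concatenating $d$ one-hot vectors, so it has exactly $d$ ones. Each instance $i$ is represented by $u_i=\sum_{i'}c_{ii'}x_{i'}$, a convex combination (weights $c_{ii'}\ge0$ summing to $1$) of such binary vectors; hence $u_i\in[0,1]^D$, $\|u_i\|_1\le d$. A proxy datum is a finite nonempty list $O=((u_1,y_1),\dots,(u_n,y_n))$ of such vectors with labels $y_i\in\mathcal Y$; $\mathcal Z$ is the set of all proxy data. The model predicts $h(u;\Psi)=\sigma(u\cdot\Psi)$, $\Psi\in\mathbb R^D$, $\sigma$ the logistic sigmoid, and $\mathcal L(O,\Psi)=\frac1n\sum_{i=1}^n l(y_i,h(u_i;\Psi))$ with $l$ differentiable in its second argument. Assumptions: (A1) $|l(y,a)-l(y,b)|\le\beta|a-b|$ for all $y,a,b$; (A2) for all $y,y'$, all admissible $u,u'$ and all $\Psi,\Psi'$, $\|\nabla_\Psi l(y,h(u;\Psi))-\nabla_\Psi l(y',h(u';\Psi'))\|_2\le\beta'\|\nabla_\Psi h(u;\Psi)-\nabla_\Psi h(u';\Psi')\|_2$. SGD with step size $\alpha\in(0,1]$ on a sequence $\mathcal S=(O_1,\dots,O_M)$: indices $j_0,\dots,j_{T-1}$ are drawn i.i.d. uniformly from $\{1,\dots,M\}$ (expectation $\mathbb E_A$ is over these indices), and $\Psi_{\mathcal S,t+1}=\Psi_{\mathcal S,t}-\alpha\nabla_\Psi\mathcal L(O_{j_t},\Psi_{\mathcal S,t})$, $\Psi_{\mathcal S,0}=\Psi_0$.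 *)

From HB Require Import structures.
From mathcomp Require Import all_boot all_order all_algebra.
From mathcomp Require Import all_classical all_reals all_analysis.
From Stdlib Require List.
Set Implicit Arguments. Unset Strict Implicit. Unset Printing Implicit Defensive.
Import Order.TTheory GRing.Theory Num.Theory.
Local Open Scope ring_scope.

Section Defs.
Variable R : realType.

Definition norm2 (D : nat) (v : 'rV[R]_D) : R := Num.sqrt (\sum_(k < D) v 0 k ^+ 2).

Definition dotp (D : nat) (u v : 'rV[R]_D) : R := \sum_(k < D) u 0 k * v 0 k.

Definition sigmoid (x : R) : R := 1 / (1 + expR (- x)).

Definition hmodel (D : nat) (u Psi : 'rV[R]_D) : R := sigmoid (dotp u Psi).

Definition grad (D : nat) (f : 'rV[R]_D -> R) (Psi : 'rV[R]_D) : 'rV[R]_D :=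
  \row_(k < D) derive1 (fun t : R => f (Psi + t *: delta_mx 0 k)) 0.

(* An instance: concatenation of d one-hot vectors, block i of size ks i;
   D = \sum_i ks i. *)
Definition is_instance (d : nat) (ks : 'I_d -> nat)
  (x : 'rV[R]_(\sum_(i < d) ks i)) : Prop :=
  exists c : forall i : 'I_d, 'I_(ks i),
    x = \mxrow_(i < d) (delta_mx 0 (c i) : 'rV[R]_(ks i)).

Definition admissible (d : nat) (ks : 'I_d -> nat)
  (u : 'rV[R]_(\sum_(i < d) ks i)) : Prop :=
  exists (n : nat) (c : 'I_n -> R) (x : 'I_n -> 'rV[R]_(\sum_(i < d) ks i)),
    [/\ forall k, 0 <= c k, \sum_(k < n) c k = 1,
        forall k, is_instance (x k) & u = \sum_(k < n) c k *: x k].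

Definition proxy_datum (Y : Type) (d : nat) (ks : 'I_d -> nat)
  (O : seq ('rV[R]_(\sum_(i < d) ks i) * Y)) : Prop :=
  (0 < size O)%N /\ forall p, Stdlib.Lists.List.In p O -> admissible p.1.

Definition proxy_loss (Y : Type) (D : nat) (l : Y -> R -> R)
  (O : seq ('rV[R]_D * Y)) (Psi : 'rV[R]_D) : R :=
  (size O)%:R^-1 * \sum_(p <- O) l p.2 (hmodel p.1 Psi).

Definition sgd (Y : Type) (D M : nat) (l : Y -> R -> R) (alpha : R)
  (S : 'I_M -> seq ('rV[R]_D * Y)) (Psi0 : 'rV[R]_D) (js : seq 'I_M)
  : 'rV[R]_D :=
  foldl (fun Psi j => Psi - alpha *: grad (proxy_loss l (S j)) Psi) Psi0 js.

(* expectation over i.i.d. uniform indices j_0..j_{T-1} in {1..M} *)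
Definition expA (M T : nat) (f : T.-tuple 'I_M -> R) : R :=
  (M ^ T)%:R^-1 * \sum_(js : T.-tuple 'I_M) f js.

Definition replace_at (A : Type) (M : nat) (S : 'I_M -> A) (m : 'I_M) (O' : A)
  : 'I_M -> A := fun j => if j == m then O' else S j.

End Defs.

From HB Require Import structures.
From mathcomp Require Import all_boot all_order all_algebra.
From mathcomp Require Import all_classical all_reals all_analysis.
From mathcomp Require Import ring lra.
Import Order.TTheory GRing.Theory Num.Theory numFieldNormedType.Exports.
Set Implicit Arguments. Unset Strict Implicit. Unset Printing Implicit Defensive.
Local Open Scope ring_scope.

(* The gradient of
   l(y, sigma(u . Psi)) in Psi is l'(sigma(u . Psi)) sigma'(u . Psi) u; since
   sigma' is 1-Lipschitz and |u|^2 <= d for admissible u, assumption (A2) makes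
   Psi |-> grad L(O, Psi) (beta' d)-Lipschitz.  Hence a step with j_t <> m, where
   both runs use the same datum, multiplies the distance of the iterates by at
   most 1 + beta' d.  A step with j_t = m compares two different data; as
   |sigma'| <= 1/4 and |u| <= sqrt d, (A2) bounds the difference of the two
   gradients by beta' sqrt d.  Averaging over j_t, which equals m with
   probability 1/M, and unrolling over T steps gives the geometric sum.  The
   bound on the losses follows since every L(O, .) is (beta sqrt d)-Lipschitz. *)

Lemma ler_sum_In (R : numDomainType) (A : Type) (s : seq A) (F G : A -> R) :
  (forall a, List.In a s -> F a <= G a) -> \sum_(a <- s) F a <= \sum_(a <- s) G a.
Proof.
elim: s => [|a s IH] le_FG; rewrite ?big_nil // !big_cons lerD ?le_FG //=; first by left.
by apply: IH => b sb; apply: le_FG; right.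
Qed.

Lemma sumr_const_seq (A : Type) (V : nmodType) (s : seq A) (c : V) :
  \sum_(a <- s) c = c *+ size s.
Proof. by elim: s => [|a s IH]; rewrite ?big_nil ?big_cons ?IH ?mulrS. Qed.

Section Euclid.
Variables (R : realType) (n : nat).
Implicit Types u v w : 'rV[R]_n.

Lemma dotpC u v : dotp u v = dotp v u.
Proof. by apply: eq_bigr => k _; rewrite mulrC. Qed.

Lemma dotpDr u v w : dotp u (v + w) = dotp u v + dotp u w.
Proof. by rewrite /dotp -big_split; apply: eq_bigr => k _; rewrite mxE mulrDr. Qed.

Lemma dotpZr c u v : dotp u (c *: v) = c * dotp u v.
Proof. by rewrite /dotp mulr_sumr; apply: eq_bigr => k _; rewrite mxE mulrCA. Qed.

Lemma dotpBr u v w : dotp u (v - w) = dotp u v - dotp u w.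
Proof. by rewrite -scaleN1r dotpDr dotpZr mulN1r. Qed.

Lemma dotpDl u v w : dotp (v + w) u = dotp v u + dotp w u.
Proof. by rewrite dotpC dotpDr !(dotpC u). Qed.

Lemma dotpZl c u v : dotp (c *: v) u = c * dotp v u.
Proof. by rewrite dotpC dotpZr dotpC. Qed.

Lemma dotpBl u v w : dotp (v - w) u = dotp v u - dotp w u.
Proof. by rewrite dotpC dotpBr !(dotpC u). Qed.

Lemma dotp0l u : dotp 0 u = 0.
Proof. by rewrite /dotp big1 // => k _; rewrite mxE mul0r. Qed.

Lemma dotp0r u : dotp u 0 = 0.
Proof. by rewrite dotpC dotp0l. Qed.

Lemma dotpp_ge0 u : 0 <= dotp u u.
Proof. by apply: sumr_ge0 => k _; rewrite -expr2 sqr_ge0. Qed.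

Lemma dotpp_eq0 u : (dotp u u == 0) = (u == 0).
Proof.
apply/idP/eqP => [|->]; last by rewrite dotp0l.
rewrite psumr_eq0 => [/allP u0|k _]; last by rewrite -expr2 sqr_ge0.
apply/matrixP => i k; rewrite ord1 mxE; apply/eqP.
by rewrite -sqrf_eq0 expr2; apply: u0; rewrite mem_index_enum.
Qed.

Lemma dotp_sqr_le u v : dotp u v ^+ 2 <= dotp u u * dotp v v.
Proof.
have [->|u0] := eqVneq u 0.
  by rewrite !dotp0l expr0n mul0r.
have uu_gt0 : 0 < dotp u u by rewrite lt_def dotpp_eq0 u0 dotpp_ge0.
(* expand 0 <= |t u - v|^2 at the minimising t = <u,v> / <u,u> *)
set t := dotp u v / dotp u u.
have := dotpp_ge0 (t *: u - v).
rewrite dotpBl !dotpBr !dotpZl !dotpZr (dotpC v u).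
have tE : t * dotp u u = dotp u v by rewrite mulfVK ?gt_eqF.
move: (dotp u u) (dotp u v) (dotp v v) uu_gt0 tE => A B C A_gt0 <-; nra.
Qed.

Lemma norm2E u : norm2 u = Num.sqrt (dotp u u).
Proof. by congr Num.sqrt; apply: eq_bigr => k _; rewrite expr2. Qed.

Lemma norm2_ge0 u : 0 <= norm2 u.
Proof. exact: sqrtr_ge0. Qed.

Lemma sqr_norm2 u : norm2 u ^+ 2 = dotp u u.
Proof. by rewrite norm2E sqr_sqrtr // dotpp_ge0. Qed.

Lemma norm2_gt0 u : u != 0 -> 0 < norm2 u.
Proof. by rewrite norm2E sqrtr_gt0 lt_def dotpp_eq0 dotpp_ge0 andbT. Qed.

Lemma ler_dotp u v : `|dotp u v| <= norm2 u * norm2 v.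
Proof.
rewrite !norm2E -sqrtrM ?dotpp_ge0 // -(sqrtr_sqr (dotp u v)).
by rewrite ler_sqrt ?dotp_sqr_le // mulr_ge0 // dotpp_ge0.
Qed.

Lemma norm2D u v : norm2 (u + v) <= norm2 u + norm2 v.
Proof.
rewrite -ler_sqr ?nnegrE ?addr_ge0 ?norm2_ge0 // sqr_norm2 sqrrD !sqr_norm2.
rewrite dotpDl !dotpDr (dotpC v u).
have := ler_dotp u v; have := ler_norm (dotp u v); lra.
Qed.

Lemma norm2Z c u : norm2 (c *: u) = `|c| * norm2 u.
Proof. by rewrite !norm2E dotpZl dotpZr mulrA -expr2 sqrtrM ?sqr_ge0 // sqrtr_sqr. Qed.

Lemma norm2B u v : norm2 (u - v) <= norm2 u + norm2 v.
Proof. by rewrite -scaleN1r (le_trans (norm2D _ _)) // norm2Z normrN normr1 mul1r. Qed.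

Lemma norm20 : norm2 (0 : 'rV[R]_n) = 0.
Proof. by rewrite -(scale0r (0 : 'rV[R]_n)) norm2Z normr0 mul0r. Qed.

Lemma norm2_sum (A : Type) (s : seq A) (F : A -> 'rV[R]_n) :
  norm2 (\sum_(a <- s) F a) <= \sum_(a <- s) norm2 (F a).
Proof.
elim: s => [|a s IH]; first by rewrite !big_nil norm20.
by rewrite !big_cons (le_trans (norm2D _ _)) // lerD2l.
Qed.

Lemma mean_const (A : Type) (s : seq A) (c : 'rV[R]_n) :
  (0 < size s)%N -> (size s)%:R^-1 *: \sum_(a <- s) c = c.
Proof.
move=> s_gt0; rewrite sumr_const_seq -[c *+ _]scaler_nat scalerA mulVf ?scale1r //.
by rewrite pnatr_eq0 -lt0n.
Qed.

Lemma norm2_meanB (A : Type) (s : seq A) (F G : A -> 'rV[R]_n) (K : R) :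
  (0 < size s)%N -> (forall a, List.In a s -> norm2 (F a - G a) <= K) ->
  norm2 ((size s)%:R^-1 *: \sum_(a <- s) F a - (size s)%:R^-1 *: \sum_(a <- s) G a) <= K.
Proof.
move=> s_gt0 FG_le; rewrite -scalerBr -sumrB norm2Z ger0_norm ?invr_ge0 //.
rewrite ler_pdivrMl ?ltr0n // (le_trans (norm2_sum _ _)) //.
by rewrite (le_trans (ler_sum_In FG_le)) // sumr_const_seq mulr_natl.
Qed.

End Euclid.

Lemma lipschitz_of_derive (R : realType) (f df : R -> R) (K : R) :
  (forall x : R, is_derive x 1 f (df x)) -> (forall x, `|df x| <= K) ->
  forall a b, `|f a - f b| <= K * `|a - b|.
Proof.
move=> f_df df_le.
have f_cont : continuous f.
  by move=> x; apply/differentiable_continuous/derivable1_diffP; case: (f_df x).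
suff le_lip a b : a <= b -> `|f a - f b| <= K * `|a - b|.
  by move=> a b; case: (leP a b) => [|/ltW] /le_lip; rewrite // distrC (distrC a).
move=> le_ab; have [|c _ fE] := MVT_segment le_ab (fun x _ => f_df x).
  exact: continuous_subspaceT.
by rewrite distrC fE normrM distrC ler_wpM2r.
Qed.

Section Sigmoid.
Variable R : realType.
Implicit Types x y : R.

Definition sigmoid' x := sigmoid x * (1 - sigmoid x).

Lemma sigmoidE x : sigmoid x = (1 + expR (- x))^-1.
Proof. by rewrite /sigmoid div1r. Qed.

Lemma sigmoid_gt0 x : 0 < sigmoid x.
Proof. by rewrite sigmoidE invr_gt0 addr_gt0 ?expR_gt0. Qed.

Lemma sigmoid_lt1 x : sigmoid x < 1.
Proof. by rewrite sigmoidE invf_lt1 ?addr_gt0 ?expR_gt0 // ltrDl expR_gt0. Qed.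

Lemma sigmoid'_ge0 x : 0 <= sigmoid' x.
Proof. by rewrite mulr_ge0 ?subr_ge0 ?ltW ?sigmoid_gt0 ?sigmoid_lt1. Qed.

Lemma sigmoid'_le x : sigmoid' x <= 1/4.
Proof. by rewrite /sigmoid'; have := sqr_ge0 (sigmoid x - 1/2); nra. Qed.

Lemma sigmoid'0 : sigmoid' 0 = 1/4.
Proof. by rewrite /sigmoid' sigmoidE oppr0 expR0; field. Qed.

Lemma sigmoid'_lt x : 0 < x -> sigmoid' x < 1/4.
Proof.
move=> x_gt0; have e_lt1 : expR (- x) < 1 by rewrite expR_lt1 oppr_lt0.
have e_gt0 := expR_gt0 (- x).
have sE : sigmoid x * (1 + expR (- x)) = 1 by rewrite sigmoidE mulVf // gt_eqF ?addr_gt0.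
have := sigmoid_gt0 x; rewrite /sigmoid'; nra.
Qed.

Lemma is_derive_sigmoid x : is_derive x 1 (@sigmoid R) (sigmoid' x).
Proof.
have dexp : is_derive x 1 (fun y : R => expR (- y)) (expR (- x) * -1).
  exact: is_derive1_comp.
have dden := is_deriveD (is_derive_cst (1 : R) x 1) dexp.
have den_neq0 : 1 + expR (- x) != 0 by rewrite gt_eqF // addr_gt0 ?expR_gt0.
have -> : @sigmoid R = (fun y => ((cst 1 + fun y : R => expR (- y)) y)^-1).
  by apply/funext => y; rewrite sigmoidE.
apply: is_derive_eq (is_deriveV (f := cst 1 + fun y : R => expR (- y)) den_neq0 dden) _.
rewrite /sigmoid' sigmoidE /GRing.scale /=.
have -> : (cst 1 + fun y : R => expR (- y)) x = 1 + expR (- x) by [].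
by field.
Qed.

Lemma sigmoid_lipschitz x y : `|sigmoid x - sigmoid y| <= 1/4 * `|x - y|.
Proof.
apply: (lipschitz_of_derive (K := 1/4) (@is_derive_sigmoid)) => z.
by rewrite ger0_norm ?sigmoid'_ge0 ?sigmoid'_le.
Qed.

Lemma sigmoid'_lipschitz x y : `|sigmoid' x - sigmoid' y| <= `|x - y|.
Proof.
have -> : sigmoid' x - sigmoid' y = (sigmoid x - sigmoid y) * (1 - sigmoid x - sigmoid y).
  by rewrite /sigmoid'; ring.
have factor_le1 : `|1 - sigmoid x - sigmoid y| <= 1.
  rewrite ler_norml; have := sigmoid_gt0 x; have := sigmoid_gt0 y.
  by have := sigmoid_lt1 x; have := sigmoid_lt1 y; lra.
rewrite normrM; have := sigmoid_lipschitz x y.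
by move: (`|sigmoid x - sigmoid y|) (normr_ge0 (sigmoid x - sigmoid y)) factor_le1 => s; nra.
Qed.

End Sigmoid.

Section Gradient.
Variables (R : realType) (n : nat).
Implicit Types (u Psi G : 'rV[R]_n) (F : 'rV[R]_n -> R).

(* [grad] is built from [derive1], which is a junk value where the derivative does
   not exist; [has_grad F Psi G] asserts that it does exist along every coordinate. *)
Definition has_grad F Psi G :=
  forall k, is_derive (0 : R) 1 (fun t : R => F (Psi + t *: delta_mx 0 k)) (G 0 k).

Lemma has_gradE F Psi G : has_grad F Psi G -> grad F Psi = G.
Proof. by move=> FG; apply/matrixP => i k; rewrite ord1 mxE derive1E; case: (FG k). Qed.

Lemma has_grad_sum (A : Type) (s : seq A) (F : A -> 'rV[R]_n -> R) (G : A -> 'rV[R]_n) Psi :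
  (forall a, has_grad (F a) Psi (G a)) ->
  has_grad (fun P => \sum_(a <- s) F a P) Psi (\sum_(a <- s) G a).
Proof.
move=> FG k; elim: s => [|a s IH].
  rewrite big_nil mxE; under eq_fun do rewrite big_nil; exact: is_derive_cst.
rewrite big_cons mxE; under eq_fun do rewrite big_cons.
exact: is_deriveD (FG a k) IH.
Qed.

Lemma has_gradZ (c : R) F Psi G : has_grad F Psi G -> has_grad (fun P => c * F P) Psi (c *: G).
Proof. by move=> FG k; rewrite mxE; apply: is_deriveZ. Qed.

Lemma dotp_delta u Psi (t : R) k : dotp u (Psi + t *: delta_mx 0 k) = dotp u Psi + t * u 0 k.
Proof.
rewrite dotpDr dotpZr; congr (_ + _ * _).
rewrite /dotp (bigD1 k) //= big1 => [|j /negbTE jk]; last by rewrite mxE jk andbF mulr0.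
by rewrite mxE !eqxx mulr1 addr0.
Qed.

Lemma has_grad_dotp (g : R -> R) u Psi (dg : R) :
  is_derive (dotp u Psi) 1 g dg -> has_grad (fun P => g (dotp u P)) Psi (dg *: u).
Proof.
move=> g_dg k; under eq_fun do rewrite dotp_delta.
have dline : is_derive (0 : R) 1 (fun t : R => dotp u Psi + t * u 0 k) (u 0 k).
  have := is_deriveD (is_derive_cst (dotp u Psi) (0 : R) 1)
    (is_deriveM (is_derive_id (0 : R) 1) (is_derive_cst (u 0 k) (0 : R) 1)).
  by move/is_derive_eq; apply; rewrite add0r scaler0 add0r [_%:A]mulr1.
rewrite mxE; apply: (is_derive1_comp (f := g) _ dline).
by rewrite mul0r addr0.
Qed.

Lemma grad_hmodel u Psi : grad (hmodel u) Psi = sigmoid' (dotp u Psi) *: u.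
Proof. exact/has_gradE/has_grad_dotp/is_derive_sigmoid. Qed.

Variables (Y : Type) (l : Y -> R -> R).
Hypothesis l_derivable : forall y a, derivable (l y) a 1.

Lemma has_grad_loss y u Psi :
  has_grad (fun P => l y (hmodel u P)) Psi (grad (fun P => l y (hmodel u P)) Psi).
Proof.
suff dlh : has_grad (fun P => l y (hmodel u P)) Psi
  ('D_1 (l y) (sigmoid (dotp u Psi)) * sigmoid' (dotp u Psi) *: u) by rewrite (has_gradE dlh).
apply: (has_grad_dotp (g := l y \o @sigmoid R)).
exact/is_derive1_comp/is_derive_sigmoid/derivableP.
Qed.

Lemma grad_proxy_loss (O : seq ('rV[R]_n * Y)) Psi :
  grad (proxy_loss l O) Psi =
  (size O)%:R^-1 *: \sum_(p <- O) grad (fun P => l p.2 (hmodel p.1 P)) Psi.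
Proof. by apply/has_gradE/has_gradZ/has_grad_sum => p; apply: has_grad_loss. Qed.

End Gradient.

Section Admissible.
Variables (R : realType) (d : nat) (ks : 'I_d -> nat).
Local Notation V := 'rV[R]_(\sum_(i < d) ks i).
Implicit Types (x u : V).

Lemma instance_entry x : is_instance x -> forall k, 0 <= x 0 k <= 1.
Proof. by move=> [c ->] k; rewrite !mxE eqxx; case: (_ == _); rewrite /= lexx ler01. Qed.

Lemma instance_sum x : is_instance x -> \sum_k x 0 k = d%:R.
Proof.
move=> [c ->]; set X := \mxrow_i (delta_mx 0 (c i) : 'rV[R]_(ks i)).
have -> : \sum_k X 0 k = (X *m (const_mx 1 : 'cV_(\sum_i ks i))) 0 0.
  by rewrite !mxE; apply: eq_bigr => k _; rewrite !mxE mulr1.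
rewrite -(mxcol_const (p_ := ks)) mul_mxrow_mxcol summxE.
by rewrite (eq_bigr (fun _ => 1)) ?sumr_const ?card_ord // => i _; rewrite -rowE !mxE.
Qed.

Lemma admissible_entry u : admissible u -> forall k, 0 <= u 0 k <= 1.
Proof.
move=> [N [c [x [c_ge0 c_sum1 x_inst ->]]]] k; rewrite summxE.
apply/andP; split.
  by apply: sumr_ge0 => i _; rewrite mxE mulr_ge0 //; case/andP: (instance_entry (x_inst i) k).
rewrite -c_sum1; apply: ler_sum => i _; rewrite mxE.
by case/andP: (instance_entry (x_inst i) k) => _ /(ler_piMr (c_ge0 i)).
Qed.

Lemma admissible_sum u : admissible u -> \sum_k u 0 k = d%:R.
Proof.
move=> [N [c [x [_ c_sum1 x_inst ->]]]].
under eq_bigr do rewrite summxE.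
rewrite exchange_big /=; under eq_bigr do under eq_bigr do rewrite mxE.
by under eq_bigr do rewrite -mulr_sumr instance_sum //; rewrite -mulr_suml c_sum1 mul1r.
Qed.

(* entries in [0, 1] give u_k^2 <= u_k, and the entries sum to d *)
Lemma admissible_dotpp u : admissible u -> dotp u u <= d%:R.
Proof.
move=> u_adm; rewrite -(admissible_sum u_adm); apply: ler_sum => k _.
by case/andP: (admissible_entry u_adm k) => u_ge0 /(ler_piMr u_ge0).
Qed.

Lemma admissible_norm2 u : admissible u -> norm2 u <= Num.sqrt d%:R.
Proof. by move=> u_adm; rewrite norm2E ler_sqrt ?admissible_dotpp. Qed.

Lemma admissible_neq0 u : (0 < d)%N -> admissible u -> u != 0.
Proof.
move=> d_gt0 u_adm; apply/eqP => u0.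
have := admissible_sum u_adm; rewrite u0 big1 => [/eqP|k _]; last by rewrite mxE.
by rewrite eq_sym pnatr_eq0 gtn_eqF.
Qed.

End Admissible.

Section Expectation.
Variables (R : realType) (M : nat).

Lemma expA_cons T (f : T.+1.-tuple 'I_M -> R) :
  expA f = M%:R^-1 * \sum_(j < M) expA (fun js : T.-tuple 'I_M => f [tuple of j :: js]).
Proof.
rewrite /expA expnS natrM invfM -mulrA -mulr_sumr pair_big /=; congr (_ * _).
rewrite (reindex (fun p : 'I_M * T.-tuple 'I_M => [tuple of p.1 :: p.2])) //.
exists (fun t => (thead t, [tuple of behead t])) => [[j js] _|t _] /=.
  by congr pair; apply: val_inj.
by rewrite -tuple_eta.
Qed.

Lemma expA_tuple0 (f : 0.-tuple 'I_M -> R) : expA f = f [tuple].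
Proof.
rewrite /expA expn0 invr1 mul1r (eq_bigr (fun _ => f [tuple])) => [|t _]; last by rewrite tuple0.
by rewrite sumr_const card_tuple expn0.
Qed.

Lemma ler_expA T (f g : T.-tuple 'I_M -> R) : (forall js, f js <= g js) -> expA f <= expA g.
Proof. by move=> le_fg; rewrite ler_wpM2l ?invr_ge0 // ler_sum. Qed.

Lemma expAZ T (c : R) (f : T.-tuple 'I_M -> R) : expA (fun js => c * f js) = c * expA f.
Proof. by rewrite /expA -mulr_sumr mulrCA. Qed.

Lemma ler_norm_expA T (f : T.-tuple 'I_M -> R) : `|expA f| <= expA (fun js => `|f js|).
Proof. by rewrite /expA normrM ger0_norm ?invr_ge0 // ler_wpM2l ?invr_ge0 ?ler_norm_sum. Qed.

(* the replaced datum is drawn with probability 1/M *)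
Lemma mean_indicator (m : 'I_M) (x y : R) :
  M%:R^-1 * \sum_(j < M) (x + (j == m)%:R * y) = x + y / M%:R.
Proof.
have M_neq0 : M%:R != 0 :> R by rewrite pnatr_eq0 -lt0n (leq_ltn_trans _ (ltn_ord m)).
rewrite big_split /= sumr_const card_ord (bigD1 m) //= eqxx mul1r.
rewrite big1 => [|j /negbTE ->]; last by rewrite mul0r.
by rewrite addr0 mulrDr -[x *+ M]mulr_natl mulKf // mulrC.
Qed.

End Expectation.

Section GradientBounds.
Variables (R : realType) (Y : Type) (d : nat) (ks : 'I_d -> nat).
Local Notation V := 'rV[R]_(\sum_(i < d) ks i).
Variables (l : Y -> R -> R) (beta' : R).
Hypothesis l_derivable : forall y a, derivable (l y) a 1.
Hypothesis A2 : forall (y y' : Y) (u u' Psi Psi' : V),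
  admissible u -> admissible u' ->
  norm2 (grad (fun P => l y (hmodel u P)) Psi - grad (fun P => l y' (hmodel u' P)) Psi')
  <= beta' * norm2 (grad (hmodel u) Psi - grad (hmodel u') Psi').

Local Notation grad_l p Psi := (grad (fun P => l p.2 (hmodel p.1 P)) Psi).
Local Notation grad_L O Psi := (grad (proxy_loss l O) Psi).

Lemma grad_hmodel_lipschitz (u : V) Psi Psi' : admissible u ->
  norm2 (grad (hmodel u) Psi - grad (hmodel u) Psi') <= d%:R * norm2 (Psi - Psi').
Proof.
move=> u_adm; rewrite !grad_hmodel -scalerBl norm2Z.
apply: le_trans (ler_wpM2r (norm2_ge0 u) (sigmoid'_lipschitz _ _)) _.
rewrite -dotpBr; apply: le_trans (ler_wpM2r (norm2_ge0 u) (ler_dotp _ _)) _.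
by rewrite mulrAC -expr2 sqr_norm2 ler_wpM2r ?norm2_ge0 ?admissible_dotpp.
Qed.

Lemma norm2_grad_hmodel (u : V) Psi : admissible u ->
  norm2 (grad (hmodel u) Psi) <= 1/4 * Num.sqrt d%:R.
Proof.
move=> u_adm; rewrite grad_hmodel norm2Z ger0_norm ?sigmoid'_ge0 //.
by rewrite ler_pM ?sigmoid'_ge0 ?norm2_ge0 ?sigmoid'_le ?admissible_norm2.
Qed.

(* (A2) at (Psi, Psi') = (0, u): the right-hand side is a positive multiple of beta'. *)
Lemma beta'_ge0 (y : Y) (u : V) : (0 < d)%N -> admissible u -> 0 <= beta'.
Proof.
move=> d_gt0 u_adm; have u_neq0 := admissible_neq0 d_gt0 u_adm.
have gap : 0 < `|1/4 - sigmoid' (dotp u u)| * norm2 u.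
  rewrite mulr_gt0 ?norm2_gt0 // normr_gt0 subr_eq0 gt_eqF // sigmoid'_lt //.
  by rewrite -sqr_norm2 exprn_gt0 ?norm2_gt0.
have := A2 y y 0 u u_adm u_adm; rewrite !grad_hmodel -scalerBl norm2Z dotp0r sigmoid'0.
by move/(le_trans (norm2_ge0 _)); rewrite pmulr_lge0.
Qed.

Hypothesis beta'_nneg : 0 <= beta'.

Lemma norm2_grad_proxy_lossB (O : seq (V * Y)) Psi Psi' : proxy_datum O ->
  norm2 (grad_L O Psi - grad_L O Psi') <= beta' * d%:R * norm2 (Psi - Psi').
Proof.
move=> [nonempty admO]; rewrite !grad_proxy_loss //; apply: norm2_meanB => // p pO.
apply: le_trans (A2 p.2 p.2 Psi Psi' (admO p pO) (admO p pO)) _.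
by rewrite -mulrA ler_wpM2l // grad_hmodel_lipschitz //; apply: admO.
Qed.

Lemma norm2_grad_proxy_loss_sample (O : seq (V * Y)) (q : V * Y) Psi Psi' :
  proxy_datum O -> admissible q.1 ->
  norm2 (grad_L O Psi - grad_l q Psi') <= beta' * (Num.sqrt d%:R / 2).
Proof.
move=> [nonempty admO] q_adm; rewrite grad_proxy_loss // -[X in _ - X](mean_const _ nonempty).
apply: norm2_meanB => // p pO; apply: le_trans (A2 _ _ Psi Psi' (admO p pO) q_adm) _.
rewrite ler_wpM2l // (le_trans (norm2B _ _)) //.
apply: le_trans (lerD (norm2_grad_hmodel Psi (admO p pO)) (norm2_grad_hmodel Psi' q_adm)) _.
by rewrite -mulrDl mulrC ler_wpM2l ?sqrtr_ge0 //; lra.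
Qed.

(* both averaged gradients are compared with the gradient of one sample of O' *)
Lemma norm2_grad_proxy_loss_replace (O O' : seq (V * Y)) Psi Psi' :
  proxy_datum O -> proxy_datum O' ->
  norm2 (grad_L O Psi - grad_L O' Psi') <= beta' * Num.sqrt d%:R.
Proof.
move=> O_datum [nonempty' admO']; case: O' nonempty' admO' => // q O' nonempty' admO'.
have q_adm : admissible q.1 by apply: admO'; left.
set c := grad_l q Psi'.
have -> : grad_L O Psi - grad_L (q :: O') Psi' = (grad_L O Psi - c) - (grad_L (q :: O') Psi' - c).
  by rewrite opprB addrA subrK.
apply: le_trans (norm2B _ _) _.
rewrite [X in _ <= X](splitr (beta' * _)) -!mulrA lerD //.
  exact: norm2_grad_proxy_loss_sample.
exact: (norm2_grad_proxy_loss_sample _ _ (conj nonempty' admO')).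
Qed.

End GradientBounds.

Section Stability.
Variables (R : realType) (Y : Type) (d : nat) (ks : 'I_d -> nat).
Local Notation V := 'rV[R]_(\sum_(i < d) ks i).
Variables (l : Y -> R -> R) (beta' alpha : R) (M : nat).
Variables (S : 'I_M -> seq (V * Y)) (m : 'I_M) (Om' : seq (V * Y)).
Hypothesis l_derivable : forall y a, derivable (l y) a 1.
Hypothesis A2 : forall (y y' : Y) (u u' Psi Psi' : V),
  admissible u -> admissible u' ->
  norm2 (grad (fun P => l y (hmodel u P)) Psi - grad (fun P => l y' (hmodel u' P)) Psi')
  <= beta' * norm2 (grad (hmodel u) Psi - grad (hmodel u') Psi').
Hypothesis beta'_nneg : 0 <= beta'.
Hypothesis alpha_range : 0 < alpha <= 1.
Hypothesis S_datum : forall j, proxy_datum (S j).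
Hypothesis Om'_datum : proxy_datum Om'.

Local Notation Sm := (replace_at S m Om').
Local Notation grad_L O Psi := (grad (proxy_loss l O) Psi).
Local Notation a := (1 + beta' * d%:R).
Local Notation c := (2 * beta' * Num.sqrt d%:R).

Lemma norm2_gd_stepB (Psi Psi' G G' : V) :
  norm2 ((Psi - alpha *: G) - (Psi' - alpha *: G')) <= norm2 (Psi - Psi') + norm2 (G - G').
Proof.
have [alpha_gt0 alpha_le1] := andP alpha_range.
have -> : (Psi - alpha *: G) - (Psi' - alpha *: G') = (Psi - Psi') - alpha *: (G - G').
  by rewrite scalerBr !opprB addrACA [RHS]addrACA [- _ + - Psi']addrC.
rewrite (le_trans (norm2B _ _)) // norm2Z gtr0_norm // lerD2l ler_piMl ?norm2_ge0 //.
Qed.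

Lemma sgd_step_dist (j : 'I_M) (Psi Psi' : V) :
  norm2 ((Psi - alpha *: grad_L (S j) Psi) - (Psi' - alpha *: grad_L (Sm j) Psi'))
  <= a * norm2 (Psi - Psi') + (j == m)%:R * c.
Proof.
apply: le_trans (norm2_gd_stepB _ _ _ _) _.
have growth_ge0 : 0 <= beta' * d%:R * norm2 (Psi - Psi') by rewrite !mulr_ge0 ?norm2_ge0.
rewrite mulrDl mul1r /replace_at; case: eqVneq => [->|_].
  have := norm2_grad_proxy_loss_replace l_derivable A2 beta'_nneg Psi Psi' (S_datum m) Om'_datum.
  have : 0 <= beta' * Num.sqrt d%:R by rewrite mulr_ge0 ?sqrtr_ge0.
  rewrite mul1r -mulrA; lra.
have := norm2_grad_proxy_lossB l_derivable A2 beta'_nneg Psi Psi' (S_datum j).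
rewrite mul0r addr0; lra.
Qed.

Lemma sgd_dist_expA T (Psi Psi' : V) :
  expA (fun js : T.-tuple 'I_M => norm2 (sgd l alpha S Psi js - sgd l alpha Sm Psi' js))
  <= a ^+ T * norm2 (Psi - Psi') + c / M%:R * \sum_(t < T) a ^+ t.
Proof.
have a_ge0 : 0 <= a by rewrite addr_ge0 // mulr_ge0.
elim: T Psi Psi' => [|T IH] Psi Psi'.
  by rewrite expA_tuple0 expr0 mul1r big_ord0 mulr0 addr0.
rewrite expA_cons.
apply: (@le_trans _ _ (M%:R^-1 * \sum_(j < M) ((a ^+ T.+1 * norm2 (Psi - Psi')
    + c / M%:R * \sum_(t < T) a ^+ t) + (j == m)%:R * (a ^+ T * c)))).
  rewrite ler_wpM2l ?invr_ge0 // ler_sum // => j _; apply: le_trans (IH _ _) _.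
  rewrite [X in _ <= X]addrAC lerD2r exprSr -mulrA (mulrCA (j == m)%:R) -mulrDr.
  by rewrite ler_wpM2l ?exprn_ge0 // sgd_step_dist.
rewrite mean_indicator big_ord_recr /= mulrDr addrA lerD2l.
by rewrite (mulrC (a ^+ T)) mulrAC.
Qed.

End Stability.

Lemma lipschitz_ge0 (R : numDomainType) (f : R -> R) (K : R) :
  (forall a b, `|f a - f b| <= K * `|a - b|) -> 0 <= K.
Proof. by move=> f_lip; have := f_lip 1 0; rewrite subr0 normr1 mulr1; apply: le_trans. Qed.

Lemma proxy_datum_witness (R : realType) (Y : Type) (d : nat) (ks : 'I_d -> nat)
    (O : seq ('rV[R]_(\sum_(i < d) ks i) * Y)) :
  proxy_datum O -> exists2 p, List.In p O & admissible p.1.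
Proof. by case: O => [[]|p O] // [_ admO]; exists p; [left | apply: admO; left]. Qed.

Lemma proxy_loss_lipschitz (R : realType) (Y : Type) (d : nat) (ks : 'I_d -> nat)
    (l : Y -> R -> R) (beta : R) (O : seq ('rV[R]_(\sum_(i < d) ks i) * Y)) X X' :
  0 <= beta -> (forall y a b, `|l y a - l y b| <= beta * `|a - b|) -> proxy_datum O ->
  `|proxy_loss l O X - proxy_loss l O X'| <= beta * Num.sqrt d%:R * norm2 (X - X').
Proof.
move=> beta_ge0 l_lip [nonempty admO]; set K := beta * _ * _.
rewrite -mulrBr -sumrB normrM ger0_norm ?invr_ge0 // ler_pdivrMl ?ltr0n //.
rewrite (le_trans (ler_norm_sum _ _ _)) // (le_trans (ler_sum_In (G := fun=> K) _)) //;
  last by rewrite sumr_const_seq mulr_natl.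
move=> p pO; apply: le_trans (l_lip _ _ _) _; rewrite /K -mulrA ler_wpM2l //.
apply: le_trans (sigmoid_lipschitz _ _) _; rewrite -dotpBr.
have dot_le : `|dotp p.1 (X - X')| <= Num.sqrt d%:R * norm2 (X - X').
  rewrite (le_trans (ler_dotp _ _)) // ler_wpM2r ?norm2_ge0 //.
  by apply: admissible_norm2; apply: admO.
have := normr_ge0 (dotp p.1 (X - X')); lra.
Qed.

Lemma rV_sum_ord0_eq (R : Type) (ks : 'I_0 -> nat) (v w : 'rV[R]_(\sum_(i < 0) ks i)) : v = w.
Proof. by apply/matrixP => i [k k_lt]; exfalso; move: k_lt; rewrite big_ord0. Qed.

Theorem mainTheorem3 (R : realType) (Y : Type) (d : nat) (ks : 'I_d -> nat)
  (l : Y -> R -> R) (beta beta' alpha : R) (M T : nat)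
  (S : 'I_M -> seq ('rV[R]_(\sum_(i < d) ks i) * Y)) (m : 'I_M)
  (Om' : seq ('rV[R]_(\sum_(i < d) ks i) * Y))
  (Psi0 : 'rV[R]_(\sum_(i < d) ks i)) :
  (forall y a, derivable (l y) a 1) ->
  (forall y a b, `|l y a - l y b| <= beta * `|a - b|) ->
  (forall (y y' : Y) (u u' Psi Psi' : 'rV[R]_(\sum_(i < d) ks i)),
     admissible u -> admissible u' ->
     norm2 (grad (fun P => l y (hmodel u P)) Psi
            - grad (fun P => l y' (hmodel u' P)) Psi')
     <= beta' * norm2 (grad (hmodel u) Psi - grad (hmodel u') Psi')) ->
  0 < alpha <= 1 ->
  (forall j, proxy_datum (S j)) ->
  proxy_datum Om' ->
  let Sm := replace_at S m Om' in
  let bound := \sum_(t < T) (1 + beta' * d%:R) ^+ t in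
  expA (fun js : T.-tuple 'I_M =>
          norm2 (sgd l alpha S Psi0 js - sgd l alpha Sm Psi0 js))
    <= 2 * beta' * Num.sqrt d%:R / M%:R * bound
  /\
  (forall O : seq ('rV[R]_(\sum_(i < d) ks i) * Y), proxy_datum O ->
     `|expA (fun js : T.-tuple 'I_M =>
          proxy_loss l O (sgd l alpha S Psi0 js) - proxy_loss l O (sgd l alpha Sm Psi0 js))|
     <= 2 * beta * beta' * d%:R / M%:R * bound).
Proof.
move=> l_derivable l_lip A2 alpha_range S_datum Om'_datum Sm bound.
(* for d = 0, (A2) does not force beta' >= 0, but all parameter vectors coincide *)
have [d0|d_gt0] := posnP d.
  subst d; rewrite sqrtr0 !(mulr0, mul0r); split => [|O _];
    rewrite /expA big1 ?mulr0 ?normr0 // => js;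
    by rewrite (rV_sum_ord0_eq (sgd l alpha S Psi0 js) (sgd l alpha Sm Psi0 js)) subrr ?norm20.
have [p _ p_adm] := proxy_datum_witness (S_datum m).
have beta'_nneg := beta'_ge0 A2 p.2 d_gt0 p_adm.
have beta_ge0 := lipschitz_ge0 (l_lip p.2).
have dist := sgd_dist_expA m l_derivable A2 beta'_nneg alpha_range S_datum Om'_datum T Psi0 Psi0.
rewrite subrr norm20 mulr0 add0r in dist; split => // O O_datum.
apply: le_trans (ler_norm_expA _) _.
apply: le_trans (ler_expA (fun js => proxy_loss_lipschitz _ _ beta_ge0 l_lip O_datum)) _.
rewrite expAZ; apply: le_trans (ler_wpM2l _ dist) _; first by rewrite mulr_ge0 ?sqrtr_ge0.
have sqrt_dd : Num.sqrt d%:R * Num.sqrt d%:R = d%:R :> R by rewrite -expr2 sqr_sqrtr.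
set s := Num.sqrt d%:R in sqrt_dd *.
suff -> : 2 * beta * beta' * d%:R / M%:R * bound = beta * s * (2 * beta' * s / M%:R * bound) by [].
by rewrite -sqrt_dd; ring.
Qed.
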